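(* Let $A=T_{\sigma_A}$ and $B=T_{\sigma_B}$ be global pseudo-differential operators on $SU_q(2)$ with symbols $\sigma_A,\sigma_B\in\Phi^0(SU_q(2))$. Then $A\circ B$ is a global pseudo-differential operator with symbol $\sigma_{A\circ B}(l)=\sigma_A(l)\sigma_B(l)$ for all $l\in\frac12\mathbb{N}$.
   Context: Fix $0<q<1$. $SU_q(2)$ is the $*$-algebra generated by $a,c$ with $ac^*=qc^*a$, $ca^*=qa^*c$, $c^*a^*=qa^*c^*$, $c^*c=cc^*$, $aa^*+q^2c^*c=a^*a+c^*c=1$, with Haar state $h$, inner product $\langle y,x\rangle=h(xy^* )$, and we also use this name for its completion. For $l\in\frac12\mathbb{N}$, $T^l=[t^l_{ij}]_{-l\le i,j\le l}$ is the irreducible unitary matrix corepresentation of dimension $2l+1$; $\{t^l_{ij}\}$ is an orthogonal basis with $h(t^l_{ij}(t^l_{ij})^* )=[2l+1]_q^{-1}q^{2j}$, where $[x]_q=\frac{q^x-q^{-x}}{q-q^{-1}}$. Fourier transform: $\hat f(l)_{mn}=h(f(t^l_{nm})^* )$. For a $(2l+1)\times(2l+1)$ matrix $M$, $Tr_q(M)=Tr(D_qM)$ with $D_q=\mathrm{diag}(q^{-2i})_{-l\le i\le l}$; Fourier inversion reads $f=\sum_l[2l+1]_qTr_q(\hat f(l)T^l)$. A symbol is a map $\sigma:\frac12\mathbb{N}\to\bigcup_lM_{2l+1}(\mathbb{C})\otimes SU_q(2)$ with $\sigma(l)$ of size $2l+1$; its operator is $T_\sigma f=\mathfrak F^{-1}(\sigma\mathfrak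 Ff)=\sum_l[2l+1]_qTr_q(\sigma(l)\hat f(l)T^l)$. For $l$ write $I_{2l+1}=\{-l,-l+1,\dots,l\}$. A symbol $\sigma$ is homogeneous of Fourier order $m\in\frac12\mathbb{N}$ if for every $l$ there is a map $\psi_\sigma(l):I_{2l+1}\times I_{2l+1}\to I_{2l+1}\times I_{2l+1}$ with $\sigma(l)_{ij}\in\mathrm{Span}\{t^m_{\psi_\sigma(l)(i,j)}\}$, and $\sigma(l)_{ij}=0$ whenever $\psi_\sigma(l)(i,j)\notin I_{2m+1}\times I_{2m+1}$. $\Phi^m(SU_q(2))$ is the set of finite linear combinations of homogeneous symbols of Fourier order $m$. (In particular symbols in $\Phi^0$ have complex scalar entries.) *)

(* Axiomatic rendering of the polynomial *-algebra of SU_q(2),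
   its Haar state and its matrix coefficients t^l_{ij}. *)
From HB Require Import structures.
From mathcomp Require Import all_boot all_order all_algebra.
Set Implicit Arguments. Unset Strict Implicit. Unset Printing Implicit Defensive.
Import Order.TTheory GRing.Theory Num.Theory.
Local Open Scope ring_scope.

(* Conventions: l \in 1/2 N is encoded by n = 2l : nat; matrices of size
   2l+1 are 'M_(n.+1); the index k : 'I_(n.+1) stands for the half-integer
   k - n/2 \in I_{2l+1} = {-l, ..., l}.  Hence q^{2k_true} = q^(2k - n). *)

Section Defs.
Variables (C : numClosedFieldType) (A : algType C).

Definition qnum (q : C) (m : nat) : C :=
  (q ^ (m%:Z) - q ^ (- m%:Z)) / (q - q^-1).

Definition qpow2 (q : C) (n k : nat) : C := q ^ (2 * k%:Z - n%:Z).

Definition is_SUq2 (q : C) (star : A -> A) (a c : A) (h : A -> C)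
    (t : forall n : nat, 'M[A]_(n.+1)) : Prop :=
  [/\
      [/\ (forall x y : A, star (x + y) = star x + star y),
      (forall (k : C) (x : A), star (k *: x) = k^* *: star x),
      (forall x y : A, star (x * y) = star y * star x)
      & (forall x : A, star (star x) = x)],
      [/\ a * star c = q *: (star c * a),
          c * star a = q *: (star a * c),
          star c * star a = q *: (star a * star c),
          star c * c = c * star c
        & a * star a + (q ^+ 2) *: (star c * c) = 1
          /\ star a * a + star c * c = 1],
      [/\ (forall (k : C) (x y : A), h (k *: x + y) = k * h x + h y),
          h 1 = 1
        & (forall x : A, 0 <= h (x * star x))],
      [/\ t 0%N = 1,
          (forall n, t n *m (map_mx star (t n))^T = 1)
        & (forall n, (map_mx star (t n))^T *m t n = 1)]
      & [/\
      (forall (n n' : nat) (i j : 'I_n.+1) (i' j' : 'I_n'.+1),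
          h (t n i j * star (t n' i' j')) =
          if [&& n == n', (i : nat) == i' & (j : nat) == j']
          then (qnum q n.+1)^-1 * qpow2 q n j else 0)
    &
      (forall f : A, exists (N : nat) (coef : forall n : nat, 'M[C]_(n.+1)),
          f = \sum_(n < N) \sum_(i < n.+1) \sum_(j < n.+1)
                coef n i j *: t n i j)]].

Definition fourier (star : A -> A) (h : A -> C)
    (t : forall n : nat, 'M[A]_(n.+1)) (f : A) (n : nat) : 'M[C]_(n.+1) :=
  \matrix_(m, k) h (f * star (t n k m)).

Definition trq (q : C) (n : nat) (M : 'M[A]_(n.+1)) : A :=
  \sum_(i < n.+1) (qpow2 q n i)^-1 *: M i i.

Definition symbol := forall n : nat, 'M[A]_(n.+1).

Definition psido_term (q : C) (star : A -> A) (h : A -> C)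
    (t : forall n : nat, 'M[A]_(n.+1)) (sigma : symbol) (f : A) (n : nat) : A :=
  qnum q n.+1 *:
    trq q (sigma n *m map_mx (fun x : C => x%:A) (fourier star h t f n) *m t n).

(* Op = T_sigma: since f has finitely supported Fourier transform, the
   Fourier series is a finite sum; any cut-off beyond the support is used. *)
Definition is_psido (q : C) (star : A -> A) (h : A -> C)
    (t : forall n : nat, 'M[A]_(n.+1)) (Op : A -> A) (sigma : symbol) : Prop :=
  forall (f : A) (N : nat),
    (forall n, (N <= n)%N -> fourier star h t f n = 0) ->
    Op f = \sum_(n < N) psido_term q star h t sigma f n.

(* homogeneous of Fourier order m (m encoded as mm = 2m) *)
Definition homogeneous (t : forall n : nat, 'M[A]_(n.+1)) (mm : nat)
    (sigma : symbol) : Prop :=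
  exists psi : forall n : nat, 'I_n.+1 -> 'I_n.+1 -> 'I_n.+1 * 'I_n.+1,
  forall (n : nat) (i j : 'I_n.+1),
    let p := psi n i j in
    (* p lies in I_{2m+1} x I_{2m+1} iff it is represented by (a, b) *)
    (forall a b : 'I_mm.+1,
        2 * (a : nat)%:Z - mm%:Z = 2 * (p.1 : nat)%:Z - n%:Z ->
        2 * (b : nat)%:Z - mm%:Z = 2 * (p.2 : nat)%:Z - n%:Z ->
        exists k : C, sigma n i j = k *: t mm a b) /\
    ((~ exists a b : 'I_mm.+1,
          2 * (a : nat)%:Z - mm%:Z = 2 * (p.1 : nat)%:Z - n%:Z /\
          2 * (b : nat)%:Z - mm%:Z = 2 * (p.2 : nat)%:Z - n%:Z) ->
        sigma n i j = 0).

Definition Phi (t : forall n : nat, 'M[A]_(n.+1)) (mm : nat) (sigma : symbol)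
    : Prop :=
  exists (K : nat) (sig : 'I_K -> symbol) (coef : 'I_K -> C),
    (forall k, homogeneous t mm (sig k)) /\
    (forall n, sigma n = \sum_(k < K) (coef k)%:A *: sig k n).

End Defs.

(* A symbol of Fourier order 0 has scalar entries, because its homogeneous
   pieces are multiples of the trivial coefficient t^0_{00} = 1.  For a scalar
   symbol S, T_S f is the finite Fourier series with coefficients
   S(l) \hat f(l); by the orthogonality relations of the t^l_{ij}, the Fourier
   transform of such a series returns its coefficients.  Hence the Fourier
   transform of B f is sigma_B(l) \hat f(l), and applying A multiplies it on
   the left by sigma_A(l). *)
From mathcomp Require Import all_boot all_order all_algebra.
From mathcomp Require Import ring.
From Stdlib Require Import Classical.
Import Order.TTheory GRing.Theory Num.Theory.
Local Open Scope ring_scope.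
Set Implicit Arguments. Unset Strict Implicit.

Section LinearFunctional.
Variables (R : pzRingType) (V : lmodType R) (h : V -> R).
Hypothesis h_linear : forall (k : R) (x y : V), h (k *: x + y) = k * h x + h y.

Lemma linear_fun0 : h 0 = 0.
Proof.
have := h_linear 1 0 0; rewrite scaler0 addr0 mul1r -{1}[h 0]addr0.
by move/addrI <-.
Qed.

Lemma linear_funD x y : h (x + y) = h x + h y.
Proof. by rewrite -[x]scale1r h_linear mul1r scale1r. Qed.

Lemma linear_funZ k x : h (k *: x) = k * h x.
Proof. by rewrite -[k *: x]addr0 h_linear linear_fun0 addr0. Qed.

Lemma linear_fun_sum (I : Type) (r : seq I) (P : pred I) (F : I -> V) :
  h (\sum_(i <- r | P i) F i) = \sum_(i <- r | P i) h (F i).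
Proof. exact: (big_morph h linear_funD linear_fun0). Qed.

End LinearFunctional.

Section QNumbers.
Variables (C : numClosedFieldType) (q : C).
Hypotheses (q_gt0 : 0 < q) (q_lt1 : q < 1).

Lemma qnum_neq0 (m : nat) : qnum q m.+1 != 0.
Proof.
have qV_gt1 : 1 < q^-1 by rewrite invf_gt1.
rewrite /qnum mulf_neq0 // ?invr_eq0 subr_eq0; last first.
  apply/eqP => q_eq_qV; move: qV_gt1.
  by rewrite -q_eq_qV => /(lt_trans q_lt1); rewrite ltxx.
rewrite -exprnN; apply/eqP => qm_eq.
have qm_lt1 : q ^+ m.+1 < 1 by rewrite exprn_ilt1 // ltW.
have : 1 < (q ^+ m.+1)^-1 by rewrite invf_gt1 // exprn_gt0.
by rewrite -qm_eq => /(lt_trans qm_lt1); rewrite ltxx.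
Qed.

Lemma qpow2_neq0 (n k : nat) : qpow2 q n k != 0.
Proof. by rewrite /qpow2 expfz_neq0 // gt_eqF. Qed.

End QNumbers.

Section Phi0.
Variables (C : numClosedFieldType) (A : algType C).
Variable t : forall n : nat, 'M[A]_(n.+1).
Hypothesis t0_trivial : t 0%N = 1.

Lemma homogeneous0_entry_scalar (sigma : symbol A) :
  homogeneous t 0 sigma -> forall n i j, exists c : C, sigma n i j = c%:A.
Proof.
case=> psi hom n i j; move: hom => /(_ n i j) [in_range out_of_range].
case: (classic (exists a b : 'I_1,
    2 * (a : nat)%:Z - 0%:Z = 2 * ((psi n i j).1 : nat)%:Z - n%:Z /\
    2 * (b : nat)%:Z - 0%:Z = 2 * ((psi n i j).2 : nat)%:Z - n%:Z)).
- move=> [a [b [Ea Eb]]]; have [c ->] := in_range a b Ea Eb.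
  by exists c; rewrite t0_trivial (ord1 a) (ord1 b) mxE.
- by move/out_of_range ->; exists 0; rewrite scale0r.
Qed.

Lemma Phi0_entry_scalar (sigma : symbol A) :
  Phi t 0 sigma -> forall n i j, exists c : C, sigma n i j = c%:A.
Proof.
case=> K [sig [coef [sig_hom sigma_eq]]] n i j; rewrite sigma_eq summxE.
apply: (big_ind (fun x : A => exists c : C, x = c%:A)).
- by exists 0; rewrite scale0r.
- by move=> _ _ [c1 ->] [c2 ->]; exists (c1 + c2); rewrite scalerDl.
move=> k _; rewrite mxE.
have [d ->] := homogeneous0_entry_scalar (sig_hom k) i j.
by exists (coef k * d); rewrite mulr_algl scalerA.
Qed.

Lemma Phi0_scalar_mx (h : A -> C) (sigma : symbol A) :
  (forall (k : C) (x y : A), h (k *: x + y) = k * h x + h y) -> h 1 = 1 ->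
  Phi t 0 sigma ->
  exists S : forall n, 'M[C]_(n.+1),
    forall n, sigma n = map_mx (in_alg A) (S n).
Proof.
move=> h_linear h1 sigma_Phi0; exists (fun n => map_mx h (sigma n)) => n.
apply/matrixP => i j; rewrite !mxE.
have [c ->] := Phi0_entry_scalar sigma_Phi0 i j.
by rewrite linear_funZ // h1 mulr1.
Qed.

End Phi0.

Section FourierSeries.
Variables (C : numClosedFieldType) (A : algType C) (q : C).
Variables (star : A -> A) (h : A -> C) (t : forall n : nat, 'M[A]_(n.+1)).
Hypotheses (q_gt0 : 0 < q) (q_lt1 : q < 1).
Hypothesis h_linear : forall (k : C) (x y : A), h (k *: x + y) = k * h x + h y.
Hypothesis t_orthogonal :
  forall (n n' : nat) (i j : 'I_n.+1) (i' j' : 'I_n'.+1),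
    h (t n i j * star (t n' i' j')) =
    if [&& n == n', (i : nat) == i' & (j : nat) == j']
    then (qnum q n.+1)^-1 * qpow2 q n j else 0.

Local Notation fourier := (fourier star h t).

Definition fourier_series_term (M : forall n, 'M[C]_(n.+1)) (n : nat) : A :=
  qnum q n.+1 *: trq q (map_mx (in_alg A) (M n) *m t n).

Lemma fourier_sum (I : Type) (r : seq I) (P : pred I) (F : I -> A) n :
  fourier (\sum_(i <- r | P i) F i) n = \sum_(i <- r | P i) fourier (F i) n.
Proof.
apply/matrixP => i j; rewrite mxE summxE mulr_suml linear_fun_sum //.
by apply: eq_bigr => k _; rewrite mxE.
Qed.

Lemma fourier_series_term_coef M n' n :
  fourier (fourier_series_term M n') n = if n' == n then M n else 0.
Proof.
apply/matrixP => m k; rewrite mxE -scalerAl linear_funZ // /trq mulr_suml.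
rewrite linear_fun_sum //.
under eq_bigr => i _ do rewrite -scalerAl linear_funZ // mxE mulr_suml
  linear_fun_sum //.
under eq_bigr => i _ do under eq_bigr => j _ do
  rewrite mxE mulr_algl -scalerAl linear_funZ // t_orthogonal.
case: eqVneq => [n'_eq | _]; last first.
  rewrite mxE big1 ?mulr0 // => i _.
  by rewrite big1 ?mulr0 // => j _; rewrite mulr0.
(* only the coefficient t^l_{km} survives, and its weight cancels *)
subst n; rewrite (bigD1 m) //= [X in _ + X]big1 ?addr0; last first.
  move=> i /negbTE i_neq; rewrite big1 ?mulr0 // => j _.
  by rewrite (i_neq : (i : nat) == m = false) andbF mulr0.
rewrite (bigD1 k) //= [X in _ + X]big1 ?addr0; last first.
  by move=> j /negbTE j_neq; rewrite (j_neq : (j : nat) == k = false) mulr0.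
rewrite !eqxx /=.
have := qnum_neq0 q_gt0 q_lt1 n'; have := qpow2_neq0 q_gt0 n' m.
move: (qnum _ _) (qpow2 _ _ _) => x y x_neq0 y_neq0.
by field; rewrite x_neq0 y_neq0.
Qed.

Lemma fourier_series_coef M N n :
  fourier (\sum_(n' < N) fourier_series_term M n') n =
  if (n < N)%N then M n else 0.
Proof.
rewrite fourier_sum; under eq_bigr => n' _ do rewrite fourier_series_term_coef.
case: ltnP => [n_lt_N | N_le_n].
  rewrite (bigD1 (Ordinal n_lt_N)) //= eqxx big1 ?addr0 // => i.
  by move/negbTE; rewrite -val_eqE => ->.
by rewrite big1 // => i _; rewrite ltn_eqF // (leq_trans (ltn_ord i) N_le_n).
Qed.

Lemma psido_term_scalar (M : forall n, 'M[C]_(n.+1)) (sigma : symbol A) f n :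
  sigma n = map_mx (in_alg A) (M n) ->
  psido_term q star h t sigma f n =
  fourier_series_term (fun n => M n *m fourier f n) n.
Proof.
by move=> sigma_eq; rewrite /psido_term sigma_eq /fourier_series_term map_mxM.
Qed.

End FourierSeries.

Theorem mainTheorem4 (C : numClosedFieldType) (A : algType C) (q : C)
    (star : A -> A) (a c : A) (h : A -> C)
    (t : forall n : nat, 'M[A]_(n.+1)) :
  0 < q -> q < 1 ->
  is_SUq2 q star a c h t ->
  forall (sigmaA sigmaB : symbol A) (OpA OpB : A -> A),
    Phi t 0 sigmaA -> Phi t 0 sigmaB ->
    is_psido q star h t OpA sigmaA ->
    is_psido q star h t OpB sigmaB ->
    is_psido q star h t (OpA \o OpB) (fun n => sigmaA n *m sigmaB n).
Proof.
move=> q_gt0 q_lt1 [_ _ [h_linear h1 _] [t0 _ _] [t_orth _]].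
move=> sA sB OpA OpB sA_Phi0 sB_Phi0 OpA_sA OpB_sB f N f_supp.
have [SA sA_scalar] := Phi0_scalar_mx t0 h_linear h1 sA_Phi0.
have [SB sB_scalar] := Phi0_scalar_mx t0 h_linear h1 sB_Phi0.
have fourier_OpB n : fourier star h t (OpB f) n =
    if (n < N)%N then SB n *m fourier star h t f n else 0.
  rewrite (OpB_sB f N f_supp).
  under eq_bigr => k _ do rewrite (psido_term_scalar _ _ _ _ _ (sB_scalar k)).
  exact: (fourier_series_coef q_gt0 q_lt1 h_linear t_orth
    (fun n => SB n *m fourier star h t f n)).
rewrite /= (OpA_sA (OpB f) N) => [|n N_le_n]; last first.
  by rewrite fourier_OpB ltnNge N_le_n.
apply: eq_bigr => n _; rewrite (psido_term_scalar _ _ _ _ _ (sA_scalar n)).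
rewrite (@psido_term_scalar _ _ q star h t (fun n => SA n *m SB n)) /=;
  last first.
  by rewrite sA_scalar sB_scalar -map_mxM.
by rewrite /fourier_series_term fourier_OpB ltn_ord mulmxA.
Qed.
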